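(* Let $\rho$ be an invertible $n\times n$ density matrix (positive definite with $\mathrm{Tr}[\rho]=1$), let $A,B$ be $n\times n$ Hermitian matrices, and let $\alpha,\beta\ge 0$ satisfy either $\alpha+\beta\ge 1$ or $\alpha+\beta\le \tfrac12$. Then $$U_{\rho,\alpha,\beta}(A)\,U_{\rho,\alpha,\beta}(B)\ \ge\ \alpha\beta\,\bigl|\mathrm{Tr}[\rho[A,B]]\bigr|^2,$$ where $[A,B]=AB-BA$.
   Context: For a Hermitian matrix $H$ put $H_0=H-\mathrm{Tr}[\rho H]I$. Define $$I_{\rho,\alpha,\beta}(H)=\tfrac12\bigl\{\mathrm{Tr}[\rho H_0^2]+\mathrm{Tr}[\rho^{\alpha+\beta}H_0\rho^{1-\alpha-\beta}H_0]-\mathrm{Tr}[\rho^{\alpha}H_0\rho^{1-\alpha}H_0]-\mathrm{Tr}[\rho^{\beta}H_0\rho^{1-\beta}H_0]\bigr\},$$ $$J_{\rho,\alpha,\beta}(H)=\tfrac12\bigl\{\mathrm{Tr}[\rho H_0^2]+\mathrm{Tr}[\rho^{\alpha+\beta}H_0\rho^{1-\alpha-\beta}H_0]+\mathrm{Tr}[\rho^{\alpha}H_0\rho^{1-\alpha}H_0]+\mathrm{Tr}[\rho^{\beta}H_0\rho^{1-\beta}H_0]\bigr\},$$ and $U_{\rho,\alpha,\beta}(H)=\sqrt{I_{\rho,\alpha,\beta}(H)\,J_{\rho,\alpha,\beta}(H)}$. Real powers of $\rho$ are defined by functional calculus (well defined since $\rho$ is invertible); $\alpha+\beta\le 1$ is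 not required. *)

From HB Require Import structures.
From mathcomp Require Import all_boot all_order all_algebra.
From mathcomp Require Import sesquilinear spectral.
From mathcomp Require Import complex.
From mathcomp Require Import reals exp.
Set Implicit Arguments. Unset Strict Implicit. Unset Printing Implicit Defensive.
Import Order.TTheory GRing.Theory Num.Theory.
Local Open Scope ring_scope.
Local Open Scope sesquilinear_scope.

Section Defs.
Context {R : realType} {n : nat}.
Local Notation C := (R[i]).

Definition posdefmx (rho : 'M[C]_n) : Prop :=
  rho \is hermsymmx /\
  forall v : 'rV[C]_n, v != 0 -> 0 < (v *m rho *m v ^t*) 0 0.

Definition density_mx (rho : 'M[C]_n) : Prop := posdefmx rho /\ \tr rho = 1.

(* Real power rho^t by functional calculus, using the spectral decomposition
   rho = P^* diag(d) P  (P = spectralmx rho unitary, d = spectral_diag rho):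
   rho^t := P^* diag(d_i^t) P. For Hermitian rho the d_i are real; for
   positive definite rho they are > 0, so d_i^t = exp(t ln d_i). *)
Definition mxpowR (rho : 'M[C]_n) (t : R) : 'M[C]_n :=
  let P := spectralmx rho in
  P ^t* *m diag_mx (map_mx (fun z : C => real_complex R (powR (complex.Re z) t))
                            (spectral_diag rho)) *m P.

Definition centered (rho H : 'M[C]_n) : 'M[C]_n := H - (\tr (rho *m H))%:M.

Definition skew_term (rho H : 'M[C]_n) (a : R) : C :=
  let H0 := centered rho H in
  \tr (mxpowR rho a *m H0 *m mxpowR rho (1 - a) *m H0).

Definition Ifun (rho : 'M[C]_n) (a b : R) (H : 'M[C]_n) : C :=
  let H0 := centered rho H in
  2^-1 * (\tr (rho *m (H0 *m H0)) + skew_term rho H (a + b)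
          - skew_term rho H a - skew_term rho H b).

Definition Jfun (rho : 'M[C]_n) (a b : R) (H : 'M[C]_n) : C :=
  let H0 := centered rho H in
  2^-1 * (\tr (rho *m (H0 *m H0)) + skew_term rho H (a + b)
          + skew_term rho H a + skew_term rho H b).

Definition Ufun (rho : 'M[C]_n) (a b : R) (H : 'M[C]_n) : C :=
  sqrtC (Ifun rho a b H * Jfun rho a b H).

Definition commmx (A B : 'M[C]_n) : 'M[C]_n := A *m B - B *m A.

End Defs.

(* Diagonalise rho = P^* diag(lambda) P and write a, b for the centred observables A_0, B_0
   in the eigenbasis. Then I(A) = 1/2 sum_ij Ik(lambda_i, lambda_j) |a_ij|^2 and likewise for
   J, where Ik(x, y) = x + x^(a+b) y^(1-a-b) - x^a y^(1-a) - x^b y^(1-b), while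
   |Tr[rho [A, B]]| <= sum_ij |lambda_i - lambda_j| |a_ij| |b_ij|. Putting lambda_i = e^(m+v),
   lambda_j = e^(m-v), the symmetrised kernels become 8 e^m cosh((1-a-b)v) sinh(av) sinh(bv)
   and 8 e^m cosh((1-a-b)v) cosh(av) cosh(bv), so the pointwise inequality
   16 ab (lambda_i - lambda_j)^2 <= (Ik + Ik^T)(Jk + Jk^T) reduces to
   4 ab sinh(v)^2 <= sinh(2av) sinh(2bv) cosh((1-a-b)v)^2, which follows from the convexity
   of sinh on [0, +oo). A weighted Cauchy-Schwarz inequality over the pairs (i, j) gives
   ab |Tr[rho [A, B]]|^2 <= I(A) J(B) and <= I(B) J(A); multiply and take square roots. *)

From HB Require Import structures.
From mathcomp Require Import all_boot all_order all_algebra.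
From mathcomp Require Import sesquilinear spectral complex.
From mathcomp Require Import reals topology normedtype sequences derive realfun exp.
From mathcomp Require Import lra ring.
Import Order.TTheory GRing.Theory Num.Theory numFieldNormedType.Exports.
Import ComplexField.Normc.
Set Implicit Arguments. Unset Strict Implicit. Unset Printing Implicit Defensive.
Local Open Scope ring_scope.

Section Hyperbolic.
Variable R : realType.
Implicit Types x y v : R.

Definition sinh x := (expR x - expR (- x)) / 2.
Definition cosh x := (expR x + expR (- x)) / 2.

Lemma is_derive_cosh x : is_derive x 1 cosh (sinh x).
Proof.
rewrite /sinh /cosh.
by apply: trigger_derive; rewrite scaler0 add0r mulrN1 mulrC.
Qed.

Lemma nondecreasing_of_derive (f df : R -> R) :
  (forall x, is_derive x 1 f (df x)) -> (forall x, 0 < x -> 0 <= df x) ->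
  forall x y, 0 <= x -> x <= y -> f x <= f y.
Proof.
move=> f_df df_ge0; apply: ger0_derive1_ndecry.
- by move=> x _; exact: ex_derive.
- move=> x; rewrite in_itv /= andbT => /df_ge0.
  by rewrite derive1E (@derive_val _ _ _ _ _ _ _ (f_df x)).
- apply: continuous_subspaceT => x.
  exact/differentiable_continuous/derivable1_diffP/ex_derive.
Qed.

Lemma sinh0 : sinh 0 = 0.
Proof. by rewrite /sinh oppr0 subrr mul0r. Qed.

Lemma sinhN x : sinh (- x) = - sinh x.
Proof. by rewrite /sinh opprK -mulNr opprB. Qed.

Lemma coshN x : cosh (- x) = cosh x.
Proof. by rewrite /cosh opprK addrC. Qed.

Lemma sinh_ge0 x : 0 <= x -> 0 <= sinh x.
Proof. by move=> x0; rewrite /sinh divr_ge0 // subr_ge0 ler_expR; lra. Qed.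

Lemma cosh_le x y : 0 <= x -> x <= y -> cosh x <= cosh y.
Proof.
exact: (nondecreasing_of_derive is_derive_cosh (fun z z0 => sinh_ge0 (ltW z0))).
Qed.

Lemma sinh_le_mul mu x : 0 <= mu -> mu <= 1 -> 0 <= x -> sinh (mu * x) <= mu * sinh x.
Proof.
move=> mu0 mu1 x0.
have df y : is_derive y 1 (fun y => mu * sinh y - sinh (mu * y))
                          (mu * (cosh y - cosh (mu * y))).
  rewrite /sinh /cosh; apply: trigger_derive.
  by rewrite !scaler0 !add0r /GRing.scale /= !mulr1; ring.
have df_ge0 y : 0 < y -> 0 <= mu * (cosh y - cosh (mu * y)).
  move=> /ltW y0; rewrite mulr_ge0 // subr_ge0 cosh_le ?mulr_ge0 //.
  by rewrite -[leRHS]mul1r ler_wpM2r.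
have := nondecreasing_of_derive df df_ge0 (lexx 0) x0.
by rewrite mulr0 sinh0 mulr0 subrr subr_ge0.
Qed.

Lemma sqr_sinh_norm x : sinh x ^+ 2 = sinh `|x| ^+ 2.
Proof. by case: (ler0P x) => // _; rewrite sinhN sqrrN. Qed.

Lemma sqr_sinh_le_mul mu x : `|mu| <= 1 -> sinh (mu * x) ^+ 2 <= mu ^+ 2 * sinh x ^+ 2.
Proof.
move=> mu1; rewrite sqr_sinh_norm (sqr_sinh_norm x) normrM -real_normK ?num_real //.
rewrite -exprMn lerXn2r ?nnegrE ?sinh_le_mul //.
  by rewrite sinh_ge0 // mulr_ge0.
by rewrite mulr_ge0 // sinh_ge0.
Qed.

Lemma sinh_ge_mul k x : 0 <= x -> 1 <= k \/ -1 <= k <= 0 -> k * sinh x <= sinh (k * x).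
Proof.
move=> x0 [k1|/andP[k1 k0]].
- have k_gt0 : 0 < k by lra.
  have := @sinh_le_mul k^-1 (k * x).
  rewrite mulrA mulVf ?gt_eqF // mul1r ler_pdivlMl //; apply.
  - by rewrite invr_ge0 ltW.
  - by rewrite invf_le1.
  - by rewrite mulr_ge0 // ltW.
- have := sinh_le_mul (x := x) (mu := - k); rewrite mulNr sinhN mulNr lerN2.
  by apply; lra.
Qed.

Lemma cosh_gt0 x : 0 < cosh x.
Proof. by rewrite /cosh divr_gt0 // addr_gt0 ?expR_gt0. Qed.

Lemma sinh_mul_ge0 a b x : 0 <= a -> 0 <= b -> 0 <= sinh (a * x) * sinh (b * x).
Proof.
move=> a0 b0; have [x0|/ltW x0] := lerP 0 x.
  by rewrite mulr_ge0 // sinh_ge0 // mulr_ge0.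
by rewrite -mulrNN -!sinhN -!mulrN mulr_ge0 // sinh_ge0 // mulr_ge0 // oppr_ge0.
Qed.

Lemma sinh_double x : sinh (2 * x) = 2 * sinh x * cosh x.
Proof.
rewrite /sinh /cosh (mulrC 2 x) -mulNr !expRM_natr expRN.
have := expR_gt0 x; move: (expR x) => E E0.
by field; rewrite gt_eqF.
Qed.

Lemma sinh_sqr_sub x y : sinh (x + y) * sinh (x - y) = sinh x ^+ 2 - sinh y ^+ 2.
Proof.
rewrite /sinh !opprD !opprK !expRD !expRN.
have ex0 := expR_gt0 x; have ey0 := expR_gt0 y.
by field; rewrite !gt_eqF.
Qed.

Lemma sinhD_sinhB x y : sinh (x + y) + sinh (x - y) = 2 * sinh x * cosh y.
Proof.
rewrite /sinh /cosh !opprD !opprK !expRD !expRN.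
have ex0 := expR_gt0 x; have ey0 := expR_gt0 y.
by field; rewrite !gt_eqF.
Qed.

Lemma sinh_mul_sinh_lower a b x : 0 <= a -> 0 <= b ->
  4 * (a * b) * sinh ((a + b) * x) ^+ 2
    <= (a + b) ^+ 2 * (sinh (2 * a * x) * sinh (2 * b * x)).
Proof.
move=> a0 b0.
have [ab0|s_neq0] := eqVneq (a + b) 0.
  have [-> ->] : a = 0 /\ b = 0 by split; lra.
  by rewrite !(addr0, mul0r, mulr0) expr0n mul0r.
have s_gt0 : 0 < a + b by rewrite lt_def s_neq0 addr_ge0.
set s := a + b in s_neq0 s_gt0 *.
have -> : sinh (2 * a * x) * sinh (2 * b * x)
          = sinh (s * x) ^+ 2 - sinh ((a - b) / s * (s * x)) ^+ 2.
  by rewrite -sinh_sqr_sub; congr (sinh _ * sinh _); rewrite /s; field.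
have mu1 : `|(a - b) / s| <= 1.
  rewrite normf_div (gtr0_norm s_gt0) ler_pdivrMr // mul1r ler_norml /s.
  by apply/andP; split; lra.
have := sqr_sinh_le_mul (s * x) mu1.
move: (sinh (s * x) ^+ 2) (sinh _ ^+ 2) => S T.
rewrite expr_div_n mulrAC ler_pdivlMr ?exprn_gt0 // /s.
nra.
Qed.

(* [2 sinh(sx) cosh((1-s)x) = sinh x + sinh((2s-1)x)], and the hypothesis on [s] puts
   [2s-1] where [sinh] is superlinear on [0, +oo); this is where [a + b] must avoid
   (1/2, 1). *)
Lemma sinh_le_sinh_cosh s x : 0 <= x -> 0 <= s -> (1 <= s \/ s <= 2^-1) ->
  s * sinh x <= sinh (s * x) * cosh ((1 - s) * x).
Proof.
move=> x0 s0 hs.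
have k_range : 1 <= 2 * s - 1 \/ -1 <= 2 * s - 1 <= 0.
  by case: hs => hs; [left|right; apply/andP; split]; lra.
have := sinh_ge_mul x0 k_range.
have : sinh x + sinh ((2 * s - 1) * x) = 2 * (sinh (s * x) * cosh ((1 - s) * x)).
  by rewrite mulrA -sinhD_sinhB; congr (sinh _ + sinh _); ring.
lra.
Qed.

Lemma sinh_cosh_mixed a b x : 0 <= a -> 0 <= b -> (1 <= a + b \/ a + b <= 2^-1) ->
  4 * (a * b) * sinh x ^+ 2
    <= sinh (2 * a * x) * sinh (2 * b * x) * cosh ((1 - (a + b)) * x) ^+ 2.
Proof.
move=> a0 b0 hs.
wlog x0 : x / 0 <= x.
  move=> le_x; have [/le_x//|/ltW x_le0] := lerP 0 x.
  have := le_x (- x); rewrite oppr_ge0 => /(_ x_le0).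
  by rewrite !mulrN !sinhN coshN !sqrrN mulrNN.
have [ab0|s_neq0] := eqVneq (a + b) 0.
  have [-> ->] : a = 0 /\ b = 0 by split; lra.
  by rewrite !(mulr0, mul0r) sinh0 !mul0r.
have s_gt0 : 0 < a + b by rewrite lt_def s_neq0 addr_ge0.
have le_sinh_cosh := sinh_le_sinh_cosh x0 (ltW s_gt0) hs.
have le_sqr : (a + b) ^+ 2 * sinh x ^+ 2
              <= sinh ((a + b) * x) ^+ 2 * cosh ((1 - (a + b)) * x) ^+ 2.
  have s_sinh_ge0 : 0 <= (a + b) * sinh x by rewrite mulr_ge0 ?sinh_ge0 // ltW.
  by rewrite -!exprMn lerXn2r ?nnegrE // (le_trans s_sinh_ge0).
have le_mixed := sinh_mul_sinh_lower x a0 b0.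
have ab_ge0 : 0 <= a * b by rewrite mulr_ge0.
have Ch_ge0 := sqr_ge0 (cosh ((1 - (a + b)) * x)).
rewrite -(ler_pM2l (exprn_gt0 2 s_gt0)).
have := ler_wpM2l (mulr_ge0 (ler0n _ 4) ab_ge0) le_sqr.
have := ler_wpM2r Ch_ge0 le_mixed.
move: (sinh ((a + b) * x) ^+ 2) (cosh _ ^+ 2) => S Ch.
move: (sinh (2 * a * x) * sinh (2 * b * x)) (sinh x ^+ 2) ((a + b) ^+ 2) => P Sx s2.
lra.
Qed.
End Hyperbolic.

Section Kernels.
Variable R : realType.
Implicit Types a b m v x y t : R.

Definition mixed_power x y t := x `^ t * y `^ (1 - t).

Definition Ikernel a b x y :=
  mixed_power x y 1 + mixed_power x y (a + b) - mixed_power x y a - mixed_power x y b.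

Definition Jkernel a b x y :=
  mixed_power x y 1 + mixed_power x y (a + b) + mixed_power x y a + mixed_power x y b.

Lemma mixed_power_expR u w t :
  mixed_power (expR u) (expR w) t = expR (t * u + (1 - t) * w).
Proof. by rewrite /mixed_power /powR !expR_eq0 !expRK -expRD. Qed.

Section SymmetricPart.
Variables a b m v : R.
Let x := expR (m + v).
Let y := expR (m - v).

Let mixed_powerE t : mixed_power x y t = expR m * expR (t * v) ^+ 2 / expR v.
Proof. by rewrite mixed_power_expR -expRM_natr -expRD -expRB; congr expR; ring. Qed.

Let mixed_powerE' t : mixed_power y x t = expR m * expR v / expR (t * v) ^+ 2.
Proof. by rewrite mixed_power_expR -expRM_natr -expRD -expRB; congr expR; ring. Qed.

Let cosh_rest : cosh ((1 - (a + b)) * v) = (expR v / (expR (a * v) * expR (b * v))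
   + expR (a * v) * expR (b * v) / expR v) / 2.
Proof.
by rewrite /cosh -!expRD -!expRB; congr ((expR _ + expR _) / 2); ring.
Qed.

Lemma Ikernel_sym_expR : Ikernel a b x y + Ikernel a b y x
  = 8 * expR m * cosh ((1 - (a + b)) * v) * sinh (a * v) * sinh (b * v).
Proof.
rewrite /Ikernel !mixed_powerE !mixed_powerE' cosh_rest /sinh !expRN mul1r mulrDl expRD.
have := expR_gt0 (a * v); have := expR_gt0 (b * v); have := expR_gt0 v.
move: (expR (a * v)) (expR (b * v)) (expR v) => A B V V0 B0 A0.
by field; rewrite !gt_eqF.
Qed.

Lemma Jkernel_sym_expR : Jkernel a b x y + Jkernel a b y x
  = 8 * expR m * cosh ((1 - (a + b)) * v) * cosh (a * v) * cosh (b * v).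
Proof.
rewrite /Jkernel !mixed_powerE !mixed_powerE' cosh_rest /cosh !expRN mul1r mulrDl expRD.
have := expR_gt0 (a * v); have := expR_gt0 (b * v); have := expR_gt0 v.
move: (expR (a * v)) (expR (b * v)) (expR v) => A B V V0 B0 A0.
by field; rewrite !gt_eqF.
Qed.

Lemma sqr_sub_expR : (x - y) ^+ 2 = 4 * expR m ^+ 2 * sinh v ^+ 2.
Proof.
rewrite /x /y /sinh !expRD !expRN.
have := expR_gt0 m; have := expR_gt0 v.
move: (expR m) (expR v) => M V V0 M0.
by field; rewrite !gt_eqF.
Qed.

End SymmetricPart.

Lemma exists_expR_center x y : 0 < x -> 0 < y ->
  exists m v, x = expR (m + v) /\ y = expR (m - v).
Proof.
move=> x0 y0; exists ((ln x + ln y) / 2), ((ln x - ln y) / 2).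
have -> : (ln x + ln y) / 2 + (ln x - ln y) / 2 = ln x by field.
have -> : (ln x + ln y) / 2 - (ln x - ln y) / 2 = ln y by field.
by rewrite !lnK.
Qed.

Variables a b : R.
Hypotheses (a0 : 0 <= a) (b0 : 0 <= b).

Lemma Ikernel_sym_ge0 x y : 0 < x -> 0 < y -> 0 <= Ikernel a b x y + Ikernel a b y x.
Proof.
move=> x0 y0; have [m [v [-> ->]]] := exists_expR_center x0 y0.
rewrite Ikernel_sym_expR -mulrA mulr_ge0 ?sinh_mul_ge0 //.
apply/ltW/mulr_gt0; last exact: cosh_gt0.
by rewrite mulr_gt0 ?expR_gt0 ?ltr0n.
Qed.

Lemma Jkernel_sym_gt0 x y : 0 < x -> 0 < y -> 0 < Jkernel a b x y + Jkernel a b y x.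
Proof.
move=> x0 y0; have [m [v [-> ->]]] := exists_expR_center x0 y0.
rewrite Jkernel_sym_expR !(mulr_gt0 _ (cosh_gt0 _)) //.
by rewrite mulr_gt0 ?expR_gt0 ?ltr0n.
Qed.

Lemma Ikernel_Jkernel_sym_ge x y : (1 <= a + b \/ a + b <= 2^-1) -> 0 < x -> 0 < y ->
  16 * (a * b) * (x - y) ^+ 2
    <= (Ikernel a b x y + Ikernel a b y x) * (Jkernel a b x y + Jkernel a b y x).
Proof.
move=> hab x0 y0; have [m [v [-> ->]]] := exists_expR_center x0 y0.
rewrite sqr_sub_expR Ikernel_sym_expR Jkernel_sym_expR.
have := sinh_cosh_mixed v a0 b0 hab.
rewrite -(mulrA 2 a) sinh_double -(mulrA 2 b) sinh_double.
move/(ler_wpM2l (mulr_ge0 (ler0n _ 16) (sqr_ge0 (expR m)))).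
move: (expR m) (sinh v) (sinh (a * v)) (cosh (a * v)) (sinh (b * v)) (cosh (b * v)).
move: (cosh ((1 - (a + b)) * v)) => C E S Sa Ca Sb Cb.
lra.
Qed.
End Kernels.

Section DoubleSums.
Variables (R : realFieldType) (I : finType).

Lemma sum_symmetrize (f w : I -> I -> R) : (forall i j, w i j = w j i) ->
  \sum_i \sum_j f i j * w i j = \sum_i \sum_j (f i j + f j i) / 2 * w i j.
Proof.
move=> w_sym.
have swap : \sum_i \sum_j f j i * w i j = \sum_i \sum_j f i j * w i j.
  by rewrite exchange_big; apply: eq_bigr => i _; apply: eq_bigr => j _; rewrite w_sym.
have -> : \sum_i \sum_j (f i j + f j i) / 2 * w i j
          = (\sum_i \sum_j f i j * w i j + \sum_i \sum_j f j i * w i j) / 2.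
  rewrite -big_split mulr_suml; apply: eq_bigr => i _.
  by rewrite -big_split mulr_suml; apply: eq_bigr => j _ /=; ring.
by rewrite swap; field.
Qed.

Lemma le_mean_of_sqr_le (x q q' r r' : R) :
  0 <= x -> 0 <= q -> 0 <= q' -> 0 <= r -> 0 <= r' ->
  x ^+ 2 <= (q * r) * (q' * r') -> x <= (q * r' + q' * r) / 2.
Proof.
move=> x0 q0 q'0 r0 r'0 le_x.
rewrite -(ler_pXn2r (_ : 0 < 2)%N) ?nnegrE ?divr_ge0 ?addr_ge0 ?mulr_ge0 //.
apply: le_trans le_x _.
have -> : q * r * (q' * r') = (q * r') * (q' * r) by ring.
have := sqr_ge0 (q * r' - q' * r).
move: (q * r') (q' * r) => A B.
lra.
Qed.

Lemma weighted_cauchy_schwarz (c : R) (p q r : I -> R) :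
  0 <= c -> (forall k, 0 <= p k) -> (forall k, 0 <= q k) -> (forall k, 0 <= r k) ->
  (forall k, c * p k ^+ 2 <= q k * r k) ->
  c * (\sum_k p k) ^+ 2 <= (\sum_k q k) * (\sum_k r k).
Proof.
move=> c0 p0 q0 r0 le_cp.
have le_pair k l : c * (p k * p l) <= (q k * r l + q l * r k) / 2.
  apply: le_mean_of_sqr_le => //; first by rewrite !mulr_ge0.
  have -> : (c * (p k * p l)) ^+ 2 = (c * p k ^+ 2) * (c * p l ^+ 2) by ring.
  by rewrite ler_pM ?mulr_ge0 ?sqr_ge0.
have sum_mul (f g : I -> R) : (\sum_k f k) * (\sum_l g l) = \sum_k \sum_l f k * g l.
  by rewrite mulr_suml; apply: eq_bigr => k _; rewrite mulr_sumr.
rewrite expr2 !sum_mul mulr_sumr.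
apply: (le_trans (y := \sum_k \sum_l (q k * r l + q l * r k) / 2)).
  by apply: ler_sum => k _; rewrite mulr_sumr; apply: ler_sum => l _.
have -> : \sum_k \sum_l (q k * r l + q l * r k) / 2
          = (\sum_k \sum_l q k * r l + \sum_k \sum_l q l * r k) / 2.
  rewrite -big_split mulr_suml; apply: eq_bigr => k _.
  by rewrite -big_split mulr_suml.
by rewrite [X in _ + X]exchange_big /= -mulr2n -[_ *+ 2]mulr_natr mulfK ?pnatr_eq0.
Qed.
End DoubleSums.

Section KernelSums.
Variables (R : realType) (I : finType) (a b : R) (lam : I -> R).
Hypotheses (a0 : 0 <= a) (b0 : 0 <= b) (lam_gt0 : forall i, 0 < lam i).

Lemma Ikernel_sum_ge0 (u : I -> I -> R) : (forall i j, u i j = u j i) ->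
  0 <= \sum_i \sum_j Ikernel a b (lam i) (lam j) * u i j ^+ 2.
Proof.
move=> u_sym; rewrite sum_symmetrize => [|i j]; last by rewrite u_sym.
apply: sumr_ge0 => i _; apply: sumr_ge0 => j _.
by rewrite mulr_ge0 ?sqr_ge0 ?divr_ge0 ?Ikernel_sym_ge0.
Qed.

Lemma Jkernel_sum_ge0 (u : I -> I -> R) : (forall i j, u i j = u j i) ->
  0 <= \sum_i \sum_j Jkernel a b (lam i) (lam j) * u i j ^+ 2.
Proof.
move=> u_sym; rewrite sum_symmetrize => [|i j]; last by rewrite u_sym.
apply: sumr_ge0 => i _; apply: sumr_ge0 => j _.
by rewrite mulr_ge0 ?sqr_ge0 ?divr_ge0 ?ltW ?Jkernel_sym_gt0.
Qed.

Lemma commutator_sum_le (u w : I -> I -> R) : (1 <= a + b \/ a + b <= 2^-1) ->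
  (forall i j, 0 <= u i j) -> (forall i j, u i j = u j i) ->
  (forall i j, 0 <= w i j) -> (forall i j, w i j = w j i) ->
  a * b * (\sum_i \sum_j `|lam i - lam j| * u i j * w i j) ^+ 2
    <= (2^-1 * \sum_i \sum_j Ikernel a b (lam i) (lam j) * u i j ^+ 2)
     * (2^-1 * \sum_i \sum_j Jkernel a b (lam i) (lam j) * w i j ^+ 2).
Proof.
move=> hab u0 u_sym w0 w_sym.
rewrite (@sum_symmetrize _ _ (fun i j => Ikernel a b (lam i) (lam j))
                           (fun i j => u i j ^+ 2)); last by move=> i j; rewrite u_sym.
rewrite (@sum_symmetrize _ _ (fun i j => Jkernel a b (lam i) (lam j))
                           (fun i j => w i j ^+ 2)); last by move=> i j; rewrite w_sym.
rewrite !pair_bigA !(mulr_sumr _ _ _ 2^-1) /=.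
apply: weighted_cauchy_schwarz => [|[i j]|[i j]|[i j]|[i j]] /=.
- exact: mulr_ge0.
- by rewrite !mulr_ge0.
- by rewrite !mulr_ge0 ?sqr_ge0 ?divr_ge0 ?invr_ge0 ?Ikernel_sym_ge0.
- by rewrite !mulr_ge0 ?sqr_ge0 ?divr_ge0 ?invr_ge0 // ltW ?Jkernel_sym_gt0.
have := Ikernel_Jkernel_sym_ge a0 b0 hab (lam_gt0 i) (lam_gt0 j).
move/(ler_wpM2r (mulr_ge0 (sqr_ge0 (u i j)) (sqr_ge0 (w i j)))).
rewrite !exprMn real_normK ?num_real //.
move: (Ikernel _ _ _ _ + _) (Jkernel _ _ _ _ + _) ((lam i - lam j) ^+ 2).
move: (u i j ^+ 2) (w i j ^+ 2) => U W P Q D.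
lra.
Qed.
End KernelSums.

Local Open Scope sesquilinear_scope.

Section HermitianTrace.
Variables (C : numClosedFieldType) (n : nat).
Implicit Types A H : 'M[C]_n.

Lemma hermsymmx_adj A : A \is hermsymmx -> A^t* = A.
Proof. by move=> /is_hermitianmxP {2}->; rewrite expr0 scale1r. Qed.

Lemma hermsymmx_entry A : A \is hermsymmx -> forall i j, A j i = (A i j)^*.
Proof. by move=> /hermsymmx_adj {1}<- i j; rewrite !mxE. Qed.

Lemma adjmxM m p q (A : 'M[C]_(m, p)) (B : 'M[C]_(p, q)) : (A *m B)^t* = B^t* *m A^t*.
Proof. by rewrite trmx_mul map_mxM. Qed.

Lemma mxtrace_adj A : \tr (A^t*) = (\tr A)^*.
Proof. by rewrite trace_map_mx mxtrace_tr. Qed.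

Lemma mxtrace_hermsymmx_mul_real A H : A \is hermsymmx -> H \is hermsymmx ->
  (\tr (A *m H))^* = \tr (A *m H).
Proof.
move=> hA hH.
by rewrite -mxtrace_adj adjmxM (hermsymmx_adj hA) (hermsymmx_adj hH) mxtrace_mulC.
Qed.

Lemma conj_hermsymmx (P H : 'M[C]_n) : H \is hermsymmx -> P *m H *m P^t* \is hermsymmx.
Proof.
move=> hH; apply/is_hermitianmxP; rewrite expr0 scale1r.
by rewrite !adjmxM trmxCK (hermsymmx_adj hH) mulmxA.
Qed.

Lemma mxtrace_conj_diag (P M N : 'M[C]_n) (x y : 'rV[C]_n) :
  \tr (P^t* *m diag_mx x *m P *m M *m (P^t* *m diag_mx y *m P) *m N)
  = \sum_i \sum_j x 0 i * (P *m M *m P^t*) i j * y 0 j * (P *m N *m P^t*) j i.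
Proof.
have -> : \tr (P^t* *m diag_mx x *m P *m M *m (P^t* *m diag_mx y *m P) *m N)
    = \tr (diag_mx x *m (P *m M *m P^t*) *m diag_mx y *m (P *m N *m P^t*)).
  by rewrite [in RHS]mulmxA [in RHS]mxtrace_mulC; congr mxtrace; rewrite !mulmxA.
rewrite /mxtrace; apply: eq_bigr => i _; rewrite mxE; apply: eq_bigr => j _.
by rewrite mul_mx_diag mul_diag_mx !mxE.
Qed.
End HermitianTrace.

Section Spectral.
Variables (R : realType) (n : nat).
Local Notation C := R[i].
Local Open Scope complex_scope.
Implicit Types (A B H X Y : 'M[C]_n) (z : C).

Lemma normc_complex z : `|z| = (normc z)%:C.
Proof. by case: z. Qed.

Lemma mul_conj_normc z : z * z^* = (normc z ^+ 2)%:C.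
Proof. by rewrite -sqr_normc normc_complex rmorphXn. Qed.

Lemma normc_ge0 z : 0 <= normc z.
Proof. by case: z => x y; exact: sqrtr_ge0. Qed.

Lemma normc_conj z : normc z^* = normc z.
Proof. by case: z => x y /=; rewrite sqrrN. Qed.

Lemma normC_real (x : R) : `|x%:C| = `|x|%:C.
Proof. by rewrite normc_complex /= expr0n /= addr0 sqrtr_sqr. Qed.

Definition eigval (rho : 'M[C]_n) (i : 'I_n) : R := complex.Re (spectral_diag rho 0 i).

Definition eigcoord (rho H : 'M[C]_n) : 'M[C]_n :=
  spectralmx rho *m centered rho H *m (spectralmx rho)^t*.

Variable rho : 'M[C]_n.
Hypothesis rho_pd : posdefmx rho.
Local Notation P := (spectralmx rho).

Lemma spectral_adjK : P^t* *m P = 1%:M.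
Proof.
by rewrite -invmx_unitary ?spectral_unitarymx // mulVmx // spectral_unit.
Qed.

Lemma spectral_decomp : rho = P^t* *m diag_mx (spectral_diag rho) *m P.
Proof.
have /orthomx_spectralP := hermitian_normalmx rho_pd.1.
by rewrite invmx_unitary ?spectral_unitarymx.
Qed.

Lemma spectral_diag_eigval i : spectral_diag rho 0 i = (eigval rho i)%:C.
Proof.
have /mxOverP/(_ 0 i) := hermitian_spectral_diag_real rho_pd.1.
by move=> /RRe_real.
Qed.

Lemma eigval_gt0 i : 0 < eigval rho i.
Proof.
set v : 'rV[C]_n := delta_mx 0 i *m P.
have adj_delta : (delta_mx 0 i : 'rV[C]_n)^t* = delta_mx i 0.
  by rewrite trmx_delta map_delta_mx.
have v_neq0 : v != 0.
  apply/eqP => v0; have : v *m v^t* = 1%:M.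
    rewrite /v adjmxM mulmxA mulmxtVK ?spectral_unitarymx // adj_delta mul_delta_mx.
    by apply/matrixP => k l; rewrite !ord1 !mxE.
  rewrite v0 mul0mx => /matrixP/(_ 0 0).
  by rewrite !mxE => /eqP; rewrite eq_sym oner_eq0.
have := rho_pd.2 v v_neq0.
rewrite [rho in v *m rho]spectral_decomp /v adjmxM !mulmxA.
rewrite !mulmxtVK ?spectral_unitarymx //.
rewrite -rowE row_diag_mx -scalemxAl adj_delta mul_delta_mx !mxE !eqxx mulr1.
by rewrite spectral_diag_eigval ltcR.
Qed.

Lemma mxpowR_eigval t :
  mxpowR rho t = P^t* *m diag_mx (\row_j (eigval rho j `^ t)%:C) *m P.
Proof.
have -> : \row_j (eigval rho j `^ t)%:C
          = map_mx (fun z => (complex.Re z `^ t)%:C) (spectral_diag rho).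
  by apply/matrixP => i j; rewrite !mxE ord1.
by [].
Qed.

Lemma mxpowR0 : mxpowR rho 0 = 1%:M.
Proof.
rewrite mxpowR_eigval.
have -> : \row_j (eigval rho j `^ 0)%:C = const_mx 1.
  by apply/matrixP => i j; rewrite !mxE powRr0.
by rewrite diag_const_mx mulmx1 spectral_adjK.
Qed.

Lemma mxpowR1 : mxpowR rho 1 = rho.
Proof.
rewrite mxpowR_eigval.
have -> : \row_j (eigval rho j `^ 1)%:C = spectral_diag rho.
  apply/matrixP => i j.
  by rewrite !mxE ord1 powRr1 ?spectral_diag_eigval // ltW ?eigval_gt0.
by rewrite -spectral_decomp.
Qed.

Lemma centered_hermsymmx H : H \is hermsymmx -> centered rho H \is hermsymmx.
Proof.
move=> hH; have tr_real := mxtrace_hermsymmx_mul_real rho_pd.1 hH.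
apply/is_hermitianmxP; rewrite expr0 scale1r.
apply/matrixP => i j; rewrite /centered !mxE rmorphB /= rmorphMn /= tr_real.
by rewrite -(hermsymmx_entry hH j i) [j == i]eq_sym.
Qed.

Lemma eigcoord_adj H : H \is hermsymmx ->
  forall i j, eigcoord rho H j i = (eigcoord rho H i j)^*.
Proof. by move=> hH; apply/hermsymmx_entry/conj_hermsymmx/centered_hermsymmx. Qed.

Lemma skew_termE H t : H \is hermsymmx ->
  skew_term rho H t = (\sum_i \sum_j
     mixed_power (eigval rho i) (eigval rho j) t * normc (eigcoord rho H i j) ^+ 2)%:C.
Proof.
move=> hH; rewrite /skew_term !mxpowR_eigval mxtrace_conj_diag.
rewrite rmorph_sum; apply: eq_bigr => i _; rewrite rmorph_sum; apply: eq_bigr => j _.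
rewrite -/(eigcoord rho H) (eigcoord_adj hH i j); move: (eigcoord rho H) => M.
by rewrite !mxE /mixed_power 2!rmorphM /= -mul_conj_normc; ring.
Qed.

Lemma trace_sqr_centered H :
  \tr (rho *m (centered rho H *m centered rho H)) = skew_term rho H 1.
Proof. by rewrite /skew_term subrr mxpowR0 mxpowR1 mulmx1 mulmxA. Qed.

Lemma complex_half : (2^-1 : R)%:C = 2^-1.
Proof. by rewrite fmorphV /= rmorph_nat. Qed.

Lemma IfunE a b H : H \is hermsymmx -> Ifun rho a b H = (2^-1 * \sum_i \sum_j
     Ikernel a b (eigval rho i) (eigval rho j) * normc (eigcoord rho H i j) ^+ 2)%:C.
Proof.
move=> hH; rewrite /Ifun trace_sqr_centered !skew_termE // rmorphM /= complex_half.
rewrite -rmorphD -!rmorphB /=; do 2 f_equal.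
rewrite -big_split -!sumrB; apply: eq_bigr => i _ /=.
by rewrite -big_split -!sumrB; apply: eq_bigr => j _ /=; rewrite /Ikernel; ring.
Qed.

Lemma JfunE a b H : H \is hermsymmx -> Jfun rho a b H = (2^-1 * \sum_i \sum_j
     Jkernel a b (eigval rho i) (eigval rho j) * normc (eigcoord rho H i j) ^+ 2)%:C.
Proof.
move=> hH; rewrite /Jfun trace_sqr_centered !skew_termE // rmorphM /= complex_half.
rewrite -!rmorphD /=; do 2 f_equal.
rewrite -!big_split; apply: eq_bigr => i _ /=.
by rewrite -!big_split; apply: eq_bigr => j _ /=; rewrite /Jkernel; ring.
Qed.

Lemma trace_rho_mul X Y : \tr (rho *m (X *m Y))
  = \sum_i \sum_j (eigval rho i)%:C * (P *m X *m P^t*) i j * (P *m Y *m P^t*) j i.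
Proof.
have -> : rho *m (X *m Y) = mxpowR rho 1 *m X *m mxpowR rho 0 *m Y.
  by rewrite mxpowR0 mxpowR1 mulmx1 mulmxA.
rewrite !mxpowR_eigval mxtrace_conj_diag.
apply: eq_bigr => i _; apply: eq_bigr => j _.
by rewrite !(@mxE _ 1 n) powRr1 ?ltW ?eigval_gt0 // powRr0 mulr1.
Qed.

Lemma eigcoord_normc_sym H : H \is hermsymmx ->
  forall i j, normc (eigcoord rho H i j) = normc (eigcoord rho H j i).
Proof.
by move=> hH i j; rewrite (eigcoord_adj hH i j) normc_conj.
Qed.

Lemma commmx_addl_scalar A B (a : C) : commmx (A + a%:M) B = commmx A B.
Proof. by rewrite /commmx mulmxDl mulmxDr scalar_mxC opprD addrACA subrr addr0. Qed.

Lemma commmx_addr_scalar A B (b : C) : commmx A (B + b%:M) = commmx A B.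
Proof. by rewrite /commmx mulmxDl mulmxDr scalar_mxC opprD addrACA subrr addr0. Qed.

Lemma commmx_centered A B : commmx A B = commmx (centered rho A) (centered rho B).
Proof.
rewrite -[in LHS](subrK (\tr (rho *m A))%:M A) -[in LHS](subrK (\tr (rho *m B))%:M B).
by rewrite commmx_addl_scalar commmx_addr_scalar.
Qed.

Lemma trace_commutator_le A B : A \is hermsymmx -> B \is hermsymmx ->
  `|\tr (rho *m commmx A B)| <= (\sum_i \sum_j `|eigval rho i - eigval rho j|
     * normc (eigcoord rho A i j) * normc (eigcoord rho B i j))%:C.
Proof.
move=> hA hB.
rewrite commmx_centered /commmx mulmxBr raddfB /= !trace_rho_mul -!/(eigcoord rho _).
rewrite [X in _ - X]exchange_big /= -sumrB rmorph_sum.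
apply: le_trans (ler_norm_sum _ _ _) _; apply: ler_sum => i _.
rewrite -sumrB rmorph_sum.
apply: le_trans (ler_norm_sum _ _ _) _; apply: ler_sum => j _.
move: (eigcoord rho A) (eigcoord rho B) (eigcoord_adj hB i j) => MA MB ->.
have -> : (eigval rho i)%:C * MA i j * (MB i j)^* - (eigval rho j)%:C * (MB i j)^* * MA i j
          = (eigval rho i - eigval rho j)%:C * MA i j * (MB i j)^*.
  by rewrite rmorphB /=; ring.
by rewrite !normrM norm_conjC normC_real !normc_complex !rmorphM.
Qed.
End Spectral.

Section Combine.
Variable R : realType.
Local Open Scope complex_scope.

Lemma le_sqrt_mul_cross (x p q p' q' : R) :
  0 <= x -> 0 <= p -> 0 <= q -> 0 <= p' -> 0 <= q' ->
  x <= p * q' -> x <= p' * q -> x <= Num.sqrt (p * q) * Num.sqrt (p' * q').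
Proof.
move=> x0 p0 q0 p'0 q'0 le_x le_x'.
rewrite -sqrtrM ?mulr_ge0 // -(ger0_norm x0) -sqrtr_sqr ler_sqrt ?mulr_ge0 //.
have -> : p * q * (p' * q') = (p * q') * (p' * q) by ring.
by rewrite expr2 ler_pM.
Qed.

Lemma sqrtC_real (x : R) : 0 <= x -> sqrtC x%:C = (Num.sqrt x)%:C.
Proof.
move=> x0; apply/eqP; rewrite -(@eqrXn2 _ 2) // ?sqrtC_ge0 ?ler0c ?sqrtr_ge0 //.
by rewrite sqrtCK -rmorphXn /= sqr_sqrtr.
Qed.

Lemma le_sqrtC_mul_cross (z : R[i]) (s c p q p' q' : R) : `|z| <= s%:C ->
  0 <= c -> 0 <= p -> 0 <= q -> 0 <= p' -> 0 <= q' ->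
  c * s ^+ 2 <= p * q' -> c * s ^+ 2 <= p' * q ->
  c%:C * `|z| ^+ 2 <= sqrtC (p%:C * q%:C) * sqrtC (p'%:C * q'%:C).
Proof.
move=> le_zs c0 p0 q0 p'0 q'0 le_pq' le_p'q.
rewrite -!rmorphM /= !sqrtC_real ?mulr_ge0 // -rmorphM /=.
apply: (le_trans (y := (c * s ^+ 2)%:C)).
  rewrite rmorphM rmorphXn /= ler_wpM2l ?ler0c //.
  by rewrite lerXn2r ?nnegrE ?normr_ge0 // (le_trans _ le_zs).
by rewrite lecR; apply: le_sqrt_mul_cross => //; rewrite mulr_ge0 ?sqr_ge0.
Qed.
End Combine.

Theorem theorem3p1 (R : realType) (n : nat) (rho A B : 'M[R[i]]_n) (alpha beta : R) :
  density_mx rho -> rho \in unitmx ->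
  A \is hermsymmx -> B \is hermsymmx ->
  0 <= alpha -> 0 <= beta ->
  (1 <= alpha + beta \/ alpha + beta <= 2^-1) ->
  real_complex R (alpha * beta) * `|\tr (rho *m commmx A B)| ^+ 2
    <= Ufun rho alpha beta A * Ufun rho alpha beta B.
Proof.
move=> [rho_pd _] _ hA hB a0 b0 hab.
have lam_gt0 := eigval_gt0 rho_pd.
have uA0 i j : 0 <= normc (eigcoord rho A i j) := normc_ge0 _.
have uB0 i j : 0 <= normc (eigcoord rho B i j) := normc_ge0 _.
have uA_sym := eigcoord_normc_sym rho_pd hA.
have uB_sym := eigcoord_normc_sym rho_pd hB.
rewrite /Ufun !IfunE // !JfunE //.
apply: (le_sqrtC_mul_cross (trace_commutator_le rho_pd hA hB)).
- exact: mulr_ge0.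
- by rewrite mulr_ge0 ?invr_ge0 // (Ikernel_sum_ge0 a0 b0 lam_gt0 uA_sym).
- by rewrite mulr_ge0 ?invr_ge0 // (Jkernel_sum_ge0 _ _ lam_gt0 uA_sym).
- by rewrite mulr_ge0 ?invr_ge0 // (Ikernel_sum_ge0 a0 b0 lam_gt0 uB_sym).
- by rewrite mulr_ge0 ?invr_ge0 // (Jkernel_sum_ge0 _ _ lam_gt0 uB_sym).
- exact: (commutator_sum_le a0 b0 lam_gt0 hab uA0 uA_sym uB0 uB_sym).
- under eq_bigr do under eq_bigr do rewrite mulrAC.
  exact: (commutator_sum_le a0 b0 lam_gt0 hab uB0 uB_sym uA0 uA_sym).
Qed.
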